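(* In the setting described in the context, for every $(u_1,\dots,u_n)\in C(U,W,\alpha)$ and every $i\in[n-1]$, we have $[i+1,n]\subseteq\mathrm{fix}_{(\alpha_i,n]}(u_i,u_{i+1})$.
   Context: Permutations: for integers $a\le n$, $S_{[a,n]}$ is the set of bijections of $\mathbb Z$ fixing every integer outside $[a,n]$, one-line notation $[w(a),\dots,w(n)]$; $\tau_{i,j}$ swaps $i<j$, $u\tau_{i,j}=u\circ\tau_{i,j}$; $\ell(u)$ = number of inversions; $u\lessdot_k u\tau_{i,j}$ if $i\le k<j$ and $\ell(u\tau_{i,j})=\ell(u)+1$; $u\xrightarrow{k}w$ if there is a chain $u=v_1\lessdot_k\cdots\lessdot_k v_s=w$ ($s\ge1$), $v_{t+1}=v_t\tau_{i_t,j_t}$, with $v_1(i_1)<\cdots<v_{s-1}(i_{s-1})$. $\mathrm{fix}_I(u,v)=\{u(t):t\in I,\ u(t)=v(t)\}$. For $\beta=(\beta_1,\dots,\beta_m)$, $C(u,w,\beta)$ is the set of $(v_1,\dots,v_{m+1})$ with $v_1=u$, $v_{m+1}=w$, $v_i\xrightarrow{\beta_i}v_{i+1}$. Setting: fix $a\le 0<n$ and let $A=\{(r,c):1\le r\le n,\ a\le c\le r\}$. Let $\gamma=(\gamma_N,\gamma_E,\gamma_S,\gamma_W)$ be a boundary condition of $A$: $\gamma_N(c)$ (for columns $c\in[a,n]$) is the label of the pipe entering through the top edge of the top cell $(\max(c,1),c)$ of column $c$ or $\varnothing$; $\gamma_E(r)$ the label of the pipe entering through the right edge of $(r,r)$ or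 $\varnothing$; $\gamma_S(c)$ the label of the pipe exiting through the bottom edge of $(n,c)$ or $\varnothing$; $\gamma_W(r)$ that of the pipe exiting through the left edge of $(r,a)$ or $\varnothing$. Assume $\gamma_S(c)\ne\varnothing$ for all $c\in[a,n]$, $\gamma_W(r)=\varnothing$ and $\gamma_N(r)\neq\varnothing$ for $r\in[n]$, and the non-$\varnothing$ values of $\gamma_N,\gamma_E$ are exactly $a,\dots,n$, increasing along the order: top edges of columns $a,\dots,1$, right edge of row 1, top edge of column 2, right edge of row 2, …, top edge of column $n$, right edge of row $n$. (The values of $\gamma_S$ are then also exactly $a,\dots,n$.) Put $p_c=\gamma_N(c)$ ($c\in[n]$), $\alpha_i=p_{i+1}-1$, $\alpha=(\alpha_1,\dots,\alpha_{n-1})$. $P_r=\{w\in S_{[a,n]}:w(p_j)=j\ \forall j\in(r,n]\}$; $\iota_r:P_r\to S_{[a,r]}$ deletes the values $r+1,\dots,n$ from one-line notation. $W\in P_1$: $\iota_1(W)(\ell)=\gamma_N^{-1}(\ell)$ for $\ell\in[a,p_1]$ and $\iota_1(W)$ decreasing on $(p_1,1]$. $U\in S_{[a,n]}$: $U(\ell)=\gamma_S^{-1}(\ell)$ for $\ell\in[a,n]$. (Here $\gamma_N^{-1}(\ell)$, $\gamma_S^{-1}(\ell)$ denote the column with that value.) *)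

From mathcomp Require Import all_boot all_order all_algebra.
Set Implicit Arguments. Unset Strict Implicit. Unset Printing Implicit Defensive.
Import Order.TTheory GRing.Theory Num.Theory.
Local Open Scope ring_scope.

Definition zrange (lo hi : int) : seq int :=
  if lo <= hi then [seq lo + (k%:Z) | k <- iota 0 (absz (hi - lo + 1))] else [::].

Definition in_S (a n : int) (u : int -> int) : Prop :=
  bijective u /\ forall x, (x < a) || (n < x) -> u x = x.

Definition tau (i j : int) (x : int) : int :=
  if x == i then j else if x == j then i else x.
Definition rmul_tau (u : int -> int) (i j : int) : int -> int :=
  fun x => u (tau i j x).

Definition inv_count (lo hi : int) (u : int -> int) : nat :=
  count (fun p : int * int => (p.1 < p.2) && (u p.2 < u p.1))
        [seq (x, y) | x <- zrange lo hi, y <- zrange lo hi].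

(** ell(u) = l : number of inversions, computed on any window containing
    the support of the (finitely supported) permutation u. *)
Definition has_length (u : int -> int) (l : nat) : Prop :=
  exists lo hi, (forall x, (x < lo) || (hi < x) -> u x = x) /\ inv_count lo hi u = l.

Definition kcover (k : int) (u : int -> int) (i j : int) : Prop :=
  (i <= k < j) /\ exists l, has_length u l /\ has_length (rmul_tau u i j) l.+1.

(** v_1 = u <._k v_2 <._k ... <._k v_s = w with v_{t+1} = v_t tau_{i_t,j_t},
    the pairs (i_t, j_t) listed in ps. *)
Fixpoint kchain (k : int) (u : int -> int) (ps : seq (int * int)) (w : int -> int)
  : Prop :=
  match ps with
  | [::] => forall x, u x = w x
  | (i, j) :: ps' => kcover k u i j /\ kchain k (rmul_tau u i j) ps' w
  end.

Fixpoint chain_labels (u : int -> int) (ps : seq (int * int)) : seq int :=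
  match ps with
  | [::] => [::]
  | (i, j) :: ps' => u i :: chain_labels (rmul_tau u i j) ps'
  end.

Definition kpath (k : int) (u w : int -> int) : Prop :=
  exists ps, kchain k u ps w /\ sorted (fun x y : int => x < y) (chain_labels u ps).

(** (v_1, ..., v_{m+1}) in C(u, w, beta), beta = (beta_1, ..., beta_m);
    the tuple is the family vs 1, ..., vs (m+1). *)
Definition inC (u w : int -> int) (beta : int -> int) (m : int)
    (vs : int -> int -> int) : Prop :=
  (forall x, vs 1 x = u x) /\ (forall x, vs (m + 1) x = w x) /\
  (forall i, 1 <= i <= m -> kpath (beta i) (vs i) (vs (i + 1))).

Definition in_fix_oc (lo hi : int) (u v : int -> int) (x : int) : Prop :=
  exists t, (lo < t <= hi) /\ u t = v t /\ u t = x.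

(** Boundary edges: inl c = top edge of column c, inr r = right edge of row r. *)
Definition edge_order (a n : int) : seq (int + int) :=
  [seq (inl c : int + int) | c <- zrange a 1] ++
  (inr 1 : int + int) :: flatten [seq [:: (inl c : int + int); inr c] | c <- zrange 2 n].

Definition edge_label (gN gE : int -> option int) (e : int + int) : option int :=
  match e with inl c => gN c | inr r => gE r end.

(** The standing assumptions on the boundary condition gamma = (gN, gE, gS, gW)
    (gS is total: gamma_S(c) <> empty for every column c). *)
Definition boundary_setting (a n : int) (gN gE : int -> option int)
    (gS : int -> int) (gW : int -> option int) : Prop :=
  (forall c, a <= c <= n -> a <= gS c <= n) /\
  (forall c c', a <= c <= n -> a <= c' <= n -> gS c = gS c' -> c = c') /\
  (forall r, 1 <= r <= n -> gW r = None) /\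
  (forall r, 1 <= r <= n -> gN r != None) /\
  pmap (edge_label gN gE) (edge_order a n) = zrange a n.

Definition pcol (gN : int -> option int) (c : int) : int := odflt 0 (gN c).
Definition alpha (gN : int -> option int) (i : int) : int := pcol gN (i + 1) - 1.

(** iota_r(w): delete the values r+1..n from [w(a), ..., w(n)]; result in S_[a,r]. *)
Definition iota_r (a n r : int) (w : int -> int) : int -> int :=
  fun l => if (a <= l) && (l <= r)
           then nth 0 [seq w x | x <- zrange a n & w x <= r] (absz (l - a))
           else l.

Definition is_W (a n : int) (gN : int -> option int) (W : int -> int) : Prop :=
  in_S a n W /\
  (forall j, 1 < j <= n -> W (pcol gN j) = j) /\
  (forall l, a <= l <= pcol gN 1 ->
     a <= iota_r a n 1 W l <= n /\ gN (iota_r a n 1 W l) = Some l) /\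
  (forall x y, pcol gN 1 < x -> x < y -> y <= 1 ->
     iota_r a n 1 W y < iota_r a n 1 W x).

Definition is_U (a n : int) (gS : int -> int) (U : int -> int) : Prop :=
  in_S a n U /\
  (forall l, a <= l <= n -> a <= U l <= n /\ gS (U l) = l).

(* Along a k-chain every cover u <._k u tau_{i,j} swaps an ascent u(i) < u(j),
   since otherwise the transposition could not raise the number of inversions.
   Hence values at positions <= k weakly increase and values at positions > k
   weakly decrease; in particular every u_l lies in S_[a,n].  Let m = i + 1.
   A position t with u_m(t) >= m satisfies t >= p_m: otherwise t <= alpha_l
   for all later steps, so W(t) >= u_m(t) >= m, and W(p_{W(t)}) = W(t) forces
   t = p_{W(t)} >= p_m.  Such positions lie right of alpha_i = p_m - 1, where
   u_i(t) >= u_m(t); as u_i is injective with values <= n there, a descending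
   induction on the value gives u_i(t) = u_m(t) for every value in [m, n]. *)

From mathcomp Require Import all_boot all_order all_algebra zify.
Import Order.TTheory GRing.Theory Num.Theory.
Local Open Scope ring_scope.

Set Implicit Arguments. Unset Strict Implicit.

Lemma mem_zrange (lo hi x : int) : (x \in zrange lo hi) = (lo <= x <= hi).
Proof.
rewrite /zrange; case: ifP => Hlh; last by rewrite in_nil; lia.
apply/mapP/idP => [[k]|Hx]; first by rewrite mem_iota => /andP[_ ?] ->; lia.
by exists (absz (x - lo)); [rewrite mem_iota | ]; lia.
Qed.

Lemma uniq_zrange (lo hi : int) : uniq (zrange lo hi).
Proof.
rewrite /zrange; case: ifP => // _.
by rewrite map_inj_uniq ?iota_uniq // => k1 k2 /=; lia.
Qed.

Lemma sorted_zrange (lo hi : int) : sorted <%R (zrange lo hi).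
Proof.
rewrite /zrange; case: ifP => // _.
by rewrite sorted_map; apply: sub_sorted (iota_ltn_sorted 0 _) => x y /=; lia.
Qed.

Lemma zrange_cat (lo m hi : int) : lo <= m <= hi ->
  zrange lo hi = zrange lo m ++ zrange (m + 1) hi.
Proof.
move=> Hm; rewrite /zrange.
have -> : lo <= hi by lia.
have -> : lo <= m by lia.
have -> : absz (hi - lo + 1) = addn (absz (m - lo + 1)) (absz (hi - (m + 1) + 1)) by lia.
rewrite iotaD map_cat; congr (_ ++ _); case: ifP => Hmhi.
  by rewrite add0n -[X in iota X _]addn0 iotaDl -map_comp; apply: eq_map => k /=; lia.
by have -> : absz (hi - (m + 1) + 1) = 0%N by lia.
Qed.

Lemma int_ind_ge (m : int) (P : int -> Prop) :
  P m -> (forall k, m <= k -> P k -> P (k + 1)) -> forall k, m <= k -> P k.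
Proof.
move=> P0 PS k Hk; have -> : k = m + (absz (k - m))%:Z by lia.
elim: (absz (k - m)) => [|d IH]; first by rewrite addr0.
have -> : m + d.+1%:Z = m + d%:Z + 1 by lia.
by apply: PS IH; lia.
Qed.

Lemma int_steps_trans (T : Type) (R : T -> T -> Prop) (f : int -> T) (m m' : int) :
  (forall x, R x x) -> (forall x y z, R x y -> R y z -> R x z) -> m <= m' ->
  (forall k, m <= k < m' -> R (f k) (f (k + 1))) -> R (f m) (f m').
Proof.
move=> Rrefl Rtrans; move: m'; apply: int_ind_ge => [_|k Hk IH Hstep]; first exact: Rrefl.
by apply: Rtrans (IH _) (Hstep k _) => [l Hl|]; [apply: Hstep|]; lia.
Qed.

Definition inv_pair (u : int -> int) (x y : int) : bool := (x < y) && (u y < u x).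

Lemma inv_count_sum (lo hi : int) (u : int -> int) : inv_count lo hi u =
  (\sum_(x <- zrange lo hi) \sum_(y <- zrange lo hi) inv_pair u x y)%N.
Proof.
rewrite /inv_count -sum1_count big_mkcond big_allpairs_dep.
by apply: eq_bigr => x _; apply: eq_bigr => y _; rewrite /inv_pair /=; case: ifP.
Qed.

Lemma big_rem2 (F : int -> nat) (s : seq int) (i j : int) :
  i \in s -> j \in s -> i != j ->
  (\sum_(x <- s) F x = F i + F j + \sum_(x <- rem j (rem i s)) F x)%N.
Proof.
move=> si sj nij; rewrite (big_rem i si) (big_rem j) /= ?addnA //.
by apply: rem_mem; rewrite 1?eq_sym.
Qed.

Lemma big_rem2_square (F : int -> int -> nat) (s : seq int) (i j : int) :
  i \in s -> j \in s -> i != j ->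
  let r := rem j (rem i s) in
  (\sum_(x <- s) \sum_(y <- s) F x y =
   F i i + F i j + F j i + F j j +
   \sum_(z <- r) (F z i + F z j + F i z + F j z) +
   \sum_(x <- r) \sum_(y <- r) F x y)%N.
Proof.
move=> si sj nij r.
under eq_bigr => x _ do rewrite (big_rem2 (F x) si sj nij).
rewrite !big_split /= (big_rem2 (F^~ i) si sj nij) (big_rem2 (F^~ j) si sj nij).
rewrite (big_rem2 (fun x => \sum_(y <- r) F x y)%N si sj nij) /= -/r.
lia.
Qed.

Lemma tauK (i j : int) : involutive (tau i j).
Proof.
rewrite /tau => x; case: (eqVneq x i) => [->|xi]; first by rewrite eqxx; case: eqVneq.
by case: (eqVneq x j) => [->|xj]; rewrite ?eqxx // (negbTE xi) (negbTE xj).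
Qed.

Lemma rmul_tau_bij (u : int -> int) (i j : int) : bijective u -> bijective (rmul_tau u i j).
Proof. by move=> ubij; apply: bij_comp ubij (inv_bij (@tauK i j)). Qed.

Lemma rmul_tau_l (u : int -> int) (i j : int) : rmul_tau u i j i = u j.
Proof. by rewrite /rmul_tau /tau eqxx. Qed.

Lemma rmul_tau_r (u : int -> int) (i j : int) : i != j -> rmul_tau u i j j = u i.
Proof. by move=> nij; rewrite /rmul_tau /tau eqxx eq_sym (negbTE nij). Qed.

Lemma rmul_tau_id (u : int -> int) (i j z : int) :
  z != i -> z != j -> rmul_tau u i j z = u z.
Proof. by move=> zi zj; rewrite /rmul_tau /tau (negbTE zi) (negbTE zj). Qed.

Lemma inv_pair_swap_cross (u : int -> int) (i j z : int) :
  i < j -> u j < u i -> z != i -> z != j ->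
  (inv_pair (rmul_tau u i j) z i + inv_pair (rmul_tau u i j) z j +
   inv_pair (rmul_tau u i j) i z + inv_pair (rmul_tau u i j) j z <=
   inv_pair u z i + inv_pair u z j + inv_pair u i z + inv_pair u j z)%N.
Proof.
move=> ij uji zi zj; have nij : i != j by rewrite lt_eqF.
rewrite /inv_pair rmul_tau_l (rmul_tau_r _ nij) (rmul_tau_id _ zi zj).
case: (ltgtP z i) => // ?; case: (ltgtP z j) => // ?;
case: (ltgtP (u z) (u i)) => ?; case: (ltgtP (u z) (u j)) => ? //=; lia.
Qed.

Lemma inv_count_swap_le (lo hi : int) (u : int -> int) (i j : int) :
  lo <= i -> j <= hi -> i < j -> u j < u i ->
  (inv_count lo hi (rmul_tau u i j) <= inv_count lo hi u)%N.
Proof.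
move=> loi jhi ij uji; have nij : i != j by rewrite lt_eqF.
have si : i \in zrange lo hi by rewrite mem_zrange; lia.
have sj : j \in zrange lo hi by rewrite mem_zrange; lia.
rewrite !inv_count_sum !(big_rem2_square _ si sj nij) /=.
set r := rem j (rem i (zrange lo hi)).
have r_ij z : z \in r -> (z != i) && (z != j).
  have us := uniq_zrange lo hi.
  rewrite /r (mem_rem_uniq _ (rem_uniq _ us)) inE => /andP[-> ].
  by rewrite (mem_rem_uniq _ us) inE => /andP[-> _].
have diag : (inv_pair (rmul_tau u i j) i i + inv_pair (rmul_tau u i j) i j +
             inv_pair (rmul_tau u i j) j i + inv_pair (rmul_tau u i j) j j <=
             inv_pair u i i + inv_pair u i j + inv_pair u j i + inv_pair u j j)%N.
  by rewrite /inv_pair !ltxx ij (lt_gtF ij) /= rmul_tau_l (rmul_tau_r _ nij) uji (lt_gtF uji).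
have inner : (\sum_(x <- r) \sum_(y <- r) inv_pair (rmul_tau u i j) x y =
              \sum_(x <- r) \sum_(y <- r) inv_pair u x y)%N.
  rewrite big_seq [RHS]big_seq; apply: eq_bigr => x /r_ij/andP[xi xj].
  rewrite big_seq [RHS]big_seq; apply: eq_bigr => y /r_ij/andP[yi yj].
  by rewrite /inv_pair !rmul_tau_id.
rewrite inner leq_add2r leq_add // big_seq [X in (_ <= X)%N]big_seq.
by apply: leq_sum => z /r_ij/andP[zi zj]; apply: inv_pair_swap_cross.
Qed.

Section Window.
Variables (u : int -> int) (lo hi : int).
Hypotheses (uinj : injective u) (ufix : forall x : int, (x < lo) || (hi < x) -> u x = x).

Lemma fixes_outside_maps_into (x : int) : lo <= x <= hi -> lo <= u x <= hi.
Proof.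
move=> Hx; apply: contraTT isT => Hux.
have : u (u x) = u x by apply: ufix; lia.
by move/uinj => E; move: Hux; rewrite E Hx.
Qed.

Lemma inv_pair_window (x y : int) : inv_pair u x y -> (lo <= x <= hi) && (lo <= y <= hi).
Proof.
rewrite /inv_pair => /andP[xy uyx].
have := @ufix x; have := @ufix y.
have := @fixes_outside_maps_into x; have := @fixes_outside_maps_into y; lia.
Qed.

Lemma inv_count_window (L H : int) : L <= lo -> hi <= H -> inv_count L H u = inv_count lo hi u.
Proof.
move=> HL HH; rewrite !inv_count_sum.
pose P x := lo <= x <= hi.
have pe : perm_eq (zrange lo hi) [seq x <- zrange L H | P x].
  apply: uniq_perm; rewrite ?filter_uniq ?uniq_zrange // => x.
  by rewrite mem_filter !mem_zrange /P; lia.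
rewrite (perm_big _ pe) big_filter [RHS]big_mkcond; apply: eq_bigr => x _.
case Px: (P x); last first.
  by rewrite big1 // => y _; apply/eqP; rewrite eqb0; apply: contraFN Px => /inv_pair_window/andP[].
rewrite (perm_big _ pe) big_filter [RHS]big_mkcond; apply: eq_bigr => y _.
by case Py: (P y) => //; apply/eqP; rewrite eqb0; apply: contraFN Py => /inv_pair_window/andP[].
Qed.

End Window.

Lemma kcover_lt (k : int) (u : int -> int) (i j : int) :
  injective u -> kcover k u i j -> u i < u j.
Proof.
move=> uinj [kij [l [[lo1 [hi1 [ufix ucount]]] [lo2 [hi2 [vfix vcount]]]]]].
have ij : i < j by lia.
have nij : i != j by rewrite lt_eqF.
case: (ltgtP (u i) (u j)) => [//|uji|/uinj eij]; last by move: nij; rewrite eij eqxx.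
have vinj : injective (rmul_tau u i j) by apply: inj_comp uinj (can_inj (@tauK i j)).
pose L := Num.min lo1 lo2; pose H := Num.max hi1 hi2.
have in_window x : u x != rmul_tau u i j x -> L <= x <= H.
  apply: contraR => xout; rewrite /L /H in xout.
  by rewrite ufix ?vfix //; lia.
have := in_window i; rewrite rmul_tau_l (inj_eq uinj) nij => /(_ isT) iLH.
have := in_window j; rewrite (rmul_tau_r _ nij) (inj_eq uinj) eq_sym nij => /(_ isT) jLH.
have := inv_count_swap_le (ltac:(lia) : L <= i) (ltac:(lia) : j <= H) ij uji.
rewrite (inv_count_window uinj ufix) ?(inv_count_window vinj vfix) /L /H; lia.
Qed.

Section KCover.
Variables (k : int) (u : int -> int) (i j : int).
Hypotheses (uinj : injective u) (cov : kcover k u i j).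

Lemma kcover_le_low (t : int) : t <= k -> u t <= rmul_tau u i j t.
Proof.
have ltu := kcover_lt uinj cov; case: cov => kij _ tk.
have nij : i != j by rewrite lt_eqF //; lia.
case: (eqVneq t i) => [->|ti]; first by rewrite rmul_tau_l ltW.
by rewrite rmul_tau_id // lt_eqF //; lia.
Qed.

Lemma kcover_ge_high (t : int) : k < t -> rmul_tau u i j t <= u t.
Proof.
have ltu := kcover_lt uinj cov; case: cov => kij _ kt.
have nij : i != j by rewrite lt_eqF //; lia.
case: (eqVneq t j) => [->|tj]; first by rewrite (rmul_tau_r _ nij) ltW.
by rewrite rmul_tau_id // gt_eqF //; lia.
Qed.

End KCover.

Lemma kchain_bij (k : int) (u w : int -> int) (ps : seq (int * int)) :
  bijective u -> kchain k u ps w -> bijective w.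
Proof.
elim: ps u => [|[i j] ps IH] u ubij /=; first exact: eq_bij.
by case=> _; apply: IH; apply: rmul_tau_bij.
Qed.

Lemma kchain_le_low (k : int) (u w : int -> int) (ps : seq (int * int)) (t : int) :
  bijective u -> kchain k u ps w -> t <= k -> u t <= w t.
Proof.
elim: ps u => [|[i j] ps IH] u ubij /=; first by move=> ->.
case=> cov ch tk; apply: le_trans (IH _ (rmul_tau_bij i j ubij) ch tk).
exact: kcover_le_low (bij_inj ubij) cov t tk.
Qed.

Lemma kchain_ge_high (k : int) (u w : int -> int) (ps : seq (int * int)) (t : int) :
  bijective u -> kchain k u ps w -> k < t -> w t <= u t.
Proof.
elim: ps u => [|[i j] ps IH] u ubij /=; first by move=> ->.
case=> cov ch kt; apply: le_trans (IH _ (rmul_tau_bij i j ubij) ch kt) _.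
exact: kcover_ge_high (bij_inj ubij) cov t kt.
Qed.

Section ChainSequence.
Variables (u w : int -> int) (beta : int -> int) (M : int) (vs : int -> int -> int).
Hypotheses (ubij : bijective u) (vsC : inC u w beta M vs).

Lemma inC_bij (k : int) : 1 <= k <= M + 1 -> bijective (vs k).
Proof.
case: vsC => vs1 [_ vsS]; case/andP; move: k; apply: int_ind_ge => [_|k k1 IH kM].
  by apply: (eq_bij ubij) => x; rewrite vs1.
have [ps [ch _]] := vsS k (ltac:(lia)).
exact: kchain_bij (IH (ltac:(lia))) ch.
Qed.

Lemma inC_step_le (k t : int) : 1 <= k <= M -> t <= beta k -> vs k t <= vs (k + 1) t.
Proof.
move=> kM tk; have [ps [ch _]] := vsC.2.2 k kM.
by apply: kchain_le_low ch tk; apply: inC_bij; lia.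
Qed.

Lemma inC_step_ge (k t : int) : 1 <= k <= M -> beta k < t -> vs (k + 1) t <= vs k t.
Proof.
move=> kM kt; have [ps [ch _]] := vsC.2.2 k kM.
by apply: kchain_ge_high ch kt; apply: inC_bij; lia.
Qed.

Lemma inC_le (k k' t : int) : 1 <= k <= k' -> k' <= M + 1 ->
  (forall l : int, k <= l < k' -> t <= beta l) -> vs k t <= vs k' t.
Proof.
move=> kk' k'M tbeta.
apply: (int_steps_trans (f := fun v => vs v t) (R := fun x y : int => x <= y)).
- exact: lexx.
- by move=> x y z; apply: le_trans.
- by lia.
- by move=> l lk; apply: inC_step_le; [lia | apply: tbeta].
Qed.

Lemma inC_ge (k k' t : int) : 1 <= k <= k' -> k' <= M + 1 ->
  (forall l : int, k <= l < k' -> beta l < t) -> vs k' t <= vs k t.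
Proof.
move=> kk' k'M tbeta.
apply: (int_steps_trans (f := fun v => vs v t) (R := fun x y : int => y <= x)).
- exact: lexx.
- by move=> x y z xy yz; apply: le_trans yz xy.
- by lia.
- by move=> l lk; apply: inC_step_ge; [lia | apply: tbeta].
Qed.

Lemma inC_fix_outside (a n : int) :
  (forall x : int, (x < a) || (n < x) -> u x = x) ->
  (forall x : int, (x < a) || (n < x) -> w x = x) ->
  (forall l : int, 1 <= l <= M -> a <= beta l + 1 <= n) ->
  forall k x : int, 1 <= k <= M + 1 -> (x < a) || (n < x) -> vs k x = x.
Proof.
move=> ufix wfix beta_ab k x kM xout.
have u_vs : vs 1 x = x by rewrite vsC.1 ufix.
have w_vs : vs (M + 1) x = x by rewrite vsC.2.1 wfix.
have [xa | nx] := orP xout.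
- have bx l : 1 <= l <= M -> x <= beta l by move/beta_ab; lia.
  have lo : vs 1 x <= vs k x by apply: inC_le => [||l lk]; [lia | lia | apply: bx; lia].
  have hi : vs k x <= vs (M + 1) x by apply: inC_le => [||l lk]; [lia | lia | apply: bx; lia].
  lia.
- have xb l : 1 <= l <= M -> beta l < x by move/beta_ab; lia.
  have hi : vs k x <= vs 1 x by apply: inC_ge => [||l lk]; [lia | lia | apply: xb; lia].
  have lo : vs (M + 1) x <= vs k x by apply: inC_ge => [||l lk]; [lia | lia | apply: xb; lia].
  lia.
Qed.

End ChainSequence.

Lemma sorted_cat_lt (s1 s2 : seq int) (x y : int) :
  sorted <%R (s1 ++ s2) -> x \in s1 -> y \in s2 -> x < y.
Proof.
by rewrite (sorted_pairwise lt_trans) pairwise_cat => /and3P[/allrelP lt12 _ _]; apply: lt12.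
Qed.

Lemma col_edge_mem (lo n c : int) : lo <= c <= n ->
  inl c \in flatten [seq [:: (inl c : int + int); inr c] | c <- zrange lo n].
Proof.
move=> Hc; apply/flattenP; exists [:: (inl c : int + int); inr c]; last by rewrite inE eqxx.
by apply: map_f; rewrite mem_zrange.
Qed.

Section Boundary.
Variables (a n : int) (gN gE gW : int -> option int) (gS : int -> int).
Hypothesis bset : boundary_setting a n gN gE gS gW.

Lemma pcol_some (c : int) : 1 <= c <= n -> gN c = Some (pcol gN c).
Proof. by case: bset => _ [_ [_ [gNc _]]] /gNc; rewrite /pcol; case: (gN c). Qed.

Lemma pcol_range (c : int) : 2 <= c <= n -> a <= pcol gN c <= n.
Proof.
move=> Hc; case: bset => _ [_ [_ [_ labels]]].
rewrite -mem_zrange -labels mem_pmap -(pcol_some (ltac:(lia) : 1 <= c <= n)).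
apply: (map_f _ (x := inl c)); rewrite mem_cat inE col_edge_mem ?orbT //.
Qed.

Lemma pcol_le (c c' : int) : 2 <= c <= c' -> c' <= n -> pcol gN c <= pcol gN c'.
Proof.
move=> cc' c'n; case: (eqVneq c c') => [-> //|nc]; apply: ltW.
have := sorted_zrange a n; case: bset => _ [_ [_ [_ <-]]].
rewrite /edge_order (zrange_cat (ltac:(lia) : 2 <= c <= n)) map_cat flatten_cat.
rewrite -cat_cons catA !pmap_cat -pmap_cat => /sorted_cat_lt; apply.
  rewrite mem_pmap -(pcol_some (ltac:(lia) : 1 <= c <= n)).
  apply: (map_f _ (x := inl c)); rewrite mem_cat inE col_edge_mem ?orbT //; lia.
rewrite mem_pmap -(pcol_some (ltac:(lia) : 1 <= c' <= n)).
by apply: (map_f _ (x := inl c')); apply: col_edge_mem; lia.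
Qed.

End Boundary.

(* If g t > h t then g t = h t' for a larger value h t', and by induction
   g t' = h t' = g t, contradicting injectivity. *)
Lemma eq_dominating_injection (g h : int -> int) (m n : int) :
  injective g -> (forall y : int, m <= y <= n -> exists t, h t = y) ->
  (forall t : int, m <= h t <= n -> h t <= g t <= n) ->
  forall t : int, m <= h t <= n -> g t = h t.
Proof.
move=> ginj hsurj hg t.
move Ed : (absz (n - h t)) => d; elim/ltn_ind: d t Ed => d IH t Ed ht.
have /andP[hgt gn] := hg t ht.
case: (ltP (h t) (g t)) => [hltg|]; last by move=> ?; apply/le_anti/andP.
have [t' ht'] := hsurj (g t) (ltac:(lia)).
have := IH (absz (n - h t')) (ltac:(lia)) t' erefl (ltac:(lia)).
by rewrite ht' => /ginj t't; move: ht'; rewrite t't; lia.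
Qed.

Section ChainFromUToW.
Variables (a n : int) (gN gE gW : int -> option int) (gS : int -> int).
Variables (U W : int -> int) (us : int -> int -> int).
Hypothesis bset : boundary_setting a n gN gE gS gW.
Hypotheses (HU : is_U a n gS U) (HW : is_W a n gN W).
Hypothesis usC : inC U W (alpha gN) (n - 1) us.

Let Ubij : bijective U := HU.1.1.

Lemma alpha_bounds (l : int) : 1 <= l <= n - 1 -> a <= alpha gN l + 1 <= n.
Proof. by move=> Hl; have := pcol_range bset (ltac:(lia) : 2 <= l + 1 <= n); rewrite /alpha; lia. Qed.

Lemma us_bij (k : int) : 1 <= k <= n -> bijective (us k).
Proof. by move=> Hk; apply: (inC_bij Ubij usC); lia. Qed.

Lemma us_fix_outside (k x : int) : 1 <= k <= n -> (x < a) || (n < x) -> us k x = x.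
Proof.
move=> Hk; apply: (inC_fix_outside Ubij usC HU.1.2 HW.1.2 alpha_bounds); lia.
Qed.

Lemma us_maps_into (k x : int) : 1 <= k <= n -> a <= x <= n -> a <= us k x <= n.
Proof.
move=> Hk; apply: fixes_outside_maps_into (bij_inj (us_bij Hk)) _ x => y.
exact: us_fix_outside.
Qed.

Lemma top_value_window (i t : int) : a <= 0 -> 1 <= i <= n - 1 ->
  i + 1 <= us (i + 1) t <= n -> alpha gN i < t <= n.
Proof.
move=> a0 Hi /andP[mt tn]; have [[Wbij Wfix] [Wpcol _]] := HW.
have ta : a <= t <= n.
  case: (boolP ((t < a) || (n < t))) => [out|]; last lia.
  by move: mt tn; rewrite us_fix_outside //; lia.
rewrite ltNge (andP ta).2 andbT; apply/negP; rewrite /alpha => tp.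
have : us (i + 1) t <= us (n - 1 + 1) t.
  apply: (inC_le Ubij usC) => [||l Hl]; try lia.
  by have := pcol_le bset (ltac:(lia) : 2 <= i + 1 <= l + 1) (ltac:(lia)); rewrite /alpha; lia.
rewrite usC.2.1 => iW; have Wt := fixes_outside_maps_into (bij_inj Wbij) Wfix ta.
have /(bij_inj Wbij) pWt := Wpcol (W t) (ltac:(lia)).
by have := pcol_le bset (ltac:(lia) : 2 <= i + 1 <= W t) (ltac:(lia)); rewrite pWt; lia.
Qed.

Lemma us_step_agrees_on_top (i t : int) : a <= 0 -> 1 <= i <= n - 1 ->
  i + 1 <= us (i + 1) t <= n -> us i t = us (i + 1) t.
Proof.
move=> a0 Hi; apply: (eq_dominating_injection (bij_inj (us_bij (ltac:(lia) : 1 <= i <= n)))).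
  by move=> y Hy; case: (us_bij (ltac:(lia) : 1 <= i + 1 <= n)) => g _ gK; exists (g y).
move=> t' /(top_value_window a0 Hi) tw; have ab := alpha_bounds Hi.
have := inC_step_ge Ubij usC Hi (ltac:(lia) : alpha gN i < t').
have := us_maps_into (ltac:(lia) : 1 <= i <= n) (ltac:(lia) : a <= t' <= n).
lia.
Qed.

End ChainFromUToW.

Unset Implicit Arguments.

Theorem lemma4p14 (a n : int) (gN gE gW : int -> option int) (gS : int -> int)
    (U W : int -> int) (us : int -> int -> int) :
  a <= 0 -> 0 < n ->
  boundary_setting a n gN gE gS gW ->
  is_U a n gS U -> is_W a n gN W ->
  inC U W (alpha gN) (n - 1) us ->
  forall i, 1 <= i <= n - 1 ->
  forall x, i + 1 <= x <= n -> in_fix_oc (alpha gN i) n (us i) (us (i + 1)) x.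
Proof.
move=> a0 _ bset HU HW usC i Hi x Hx.
have [g _ gK] := us_bij HU usC (ltac:(lia) : 1 <= i + 1 <= n).
have top : i + 1 <= us (i + 1) (g x) <= n by rewrite gK.
exists (g x); rewrite (us_step_agrees_on_top bset HU HW usC a0 Hi top) gK.
by have := top_value_window bset HU HW usC a0 Hi top.
Qed.
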